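(* Let $(\Gamma,M)$ be an E-GCM graph with Coxeter group $W$, and let $J\subseteq I_n$ be such that the parabolic subgroup $W_J$ is finite. Let $s_{i_p}\cdots s_{i_2}s_{i_1}$ be any reduced expression for an element of $W^J$, and let $\lambda\in C_J$. Then for each $1\le q\le p$, $(\gamma_{i_1},\dots,\gamma_{i_q})$ is a legal sequence of node firings in a numbers game played from the initial position $\lambda$ (i.e. for each $q$, the population at $\gamma_{i_q}$ is positive after firing $\gamma_{i_1},\dots,\gamma_{i_{q-1}}$ in order).
   Context: E-GCM $M=(M_{ij})_{i,j\in I_n}$: real, $M_{ii}=2$, $M_{ij}\le0$ ($i\ne j$), $M_{ij}\ne0\iff M_{ji}\ne0$, nonzero $M_{ij}M_{ji}$ either $\ge4$ or $=4\cos^2(\pi/m)$ with $m\ge3$ integer; E-GCM graph with nodes $\gamma_i$, adjacent iff $M_{ij}\ne0$. Positions $\lambda=(\lambda_i)\in\mathbb{R}^n$; firing $\gamma_i$ is allowed iff $\lambda_i>0$ and replaces each $\lambda_j$ by $\lambda_j-M_{ij}\lambda_i$. $W$: Coxeter group with generators $s_i$, $s_i^2=e$, $(s_is_j)^{m_{ij}}=e$, $m_{ij}=k$ if $M_{ij}M_{ji}=4\cos^2(\pi/k)$ ($k\ge2$), $m_{ij}=\infty$ if $M_{ij}M_{ji}\ge4$; $\ell$ = length. For $J\subseteq I_n$, $W_J$ is the subgroup generated by $\{s_j\}_{j\in J}$ and $W^J=\{w\in W:\ell(ws_j)>\ell(w)\ \forall j\in J\}$. $C_J$ is the set of positions $\lambda$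 with $\lambda_j=0$ for $j\in J$ and $\lambda_i>0$ for $i\notin J$. *)

From mathcomp Require Import all_boot.
From Stdlib Require Import Reals.
Set Implicit Arguments.
Unset Strict Implicit.
Unset Printing Implicit Defensive.

Definition is_EGCM (n : nat) (M : 'I_n -> 'I_n -> R) : Prop :=
  (forall i, M i i = 2%R) /\
  (forall i j, i != j -> (M i j <= 0)%R) /\
  (forall i j, M i j <> 0%R <-> M j i <> 0%R) /\
  (forall i j, i != j -> M i j <> 0%R ->
     (4 <= M i j * M j i)%R \/
     (exists m : nat, leq 3 m /\ M i j * M j i = 4 * (cos (PI / INR m)) ^ 2)%R).

(* Defining relators of the Coxeter group W: words r with r = e in W.
   s_i^2 = e, and (s_i s_j)^k = e when i <> j and M_ij M_ji = 4 cos^2(pi/k), k >= 2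
   (i.e. m_ij = k); no relator when M_ij M_ji >= 4 (m_ij = infinity). *)
Definition cox_relator (n : nat) (M : 'I_n -> 'I_n -> R) (r : seq 'I_n) : Prop :=
  (exists i, r = [:: i; i]) \/
  (exists i j (k : nat), i != j /\ 2 <= k /\
     (M i j * M j i = 4 * (cos (PI / INR k)) ^ 2)%R /\
     r = flatten (nseq k [:: i; j])).

(* Words w = [:: a1; ...; ak] represent s_a1 s_a2 ... s_ak in W.
   coxeq M u v : u and v represent the same element of W
   (congruence generated by the relators). *)
Inductive coxeq (n : nat) (M : 'I_n -> 'I_n -> R) : seq 'I_n -> seq 'I_n -> Prop :=
| coxeq_refl w : coxeq M w w
| coxeq_sym u v : coxeq M u v -> coxeq M v u
| coxeq_trans u v w : coxeq M u v -> coxeq M v w -> coxeq M u w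
| coxeq_rel u r v : cox_relator M r -> coxeq M (u ++ r ++ v) (u ++ v).

Definition cox_length (n : nat) (M : 'I_n -> 'I_n -> R) (w : seq 'I_n) (k : nat) : Prop :=
  (exists v, coxeq M v w /\ size v = k) /\ (forall v, coxeq M v w -> k <= size v).

Definition reduced (n : nat) (M : 'I_n -> 'I_n -> R) (w : seq 'I_n) : Prop :=
  forall v, coxeq M v w -> size w <= size v.

Definition parabolic_finite (n : nat) (M : 'I_n -> 'I_n -> R) (J : {set 'I_n}) : Prop :=
  exists L : seq (seq 'I_n),
    forall w : seq 'I_n, all (fun a => a \in J) w -> exists2 v, v \in L & coxeq M w v.

Definition in_min_coset_reps (n : nat) (M : 'I_n -> 'I_n -> R) (J : {set 'I_n})
  (w : seq 'I_n) : Prop :=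
  forall j, j \in J -> forall a b, cox_length M (rcons w j) a -> cox_length M w b -> b < a.

Definition in_CJ (n : nat) (J : {set 'I_n}) (lam : 'I_n -> R) : Prop :=
  (forall j, j \in J -> lam j = 0%R) /\ (forall i, i \notin J -> (0 < lam i)%R).

Definition fire (n : nat) (M : 'I_n -> 'I_n -> R) (i : 'I_n) (lam : 'I_n -> R) : 'I_n -> R :=
  fun j => (lam j - M i j * lam i)%R.

Fixpoint legal_seq (n : nat) (M : 'I_n -> 'I_n -> R) (lam : 'I_n -> R) (s : seq 'I_n) : Prop :=
  match s with
  | [::] => True
  | i :: s' => (0 < lam i)%R /\ legal_seq M (fire M i lam) s'
  end.

From HB Require Import structures.
From mathcomp Require Import all_boot zify.
From Stdlib Require Import Reals Lra Lia FunctionalExtensionality Classical.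
Set Implicit Arguments.
Unset Strict Implicit.
Unset Printing Implicit Defensive.

(* After firing t = [:: i_1; ...; i_(q-1)] from lam, the population at i = i_q is
   the pairing of lam with the root t alpha_i = s_(i_1) ... s_(i_(q-1)) alpha_i of
   Tits' geometric representation.  As t s_i is reduced, this root is a nonnegative
   combination of simple roots (positivity of roots, proved by the usual reduction to
   dihedral subgroups).  If its pairing with lam in C_J were not positive, the root
   would lie in the span of the alpha_j, j in J.  But (t s_i)^-1 is a right factor of
   an element of W^J, so it maps every such alpha_j, hence the root, to a nonnegative
   vector, whereas it maps t alpha_i to - alpha_i. *)

HB.instance Definition _ := Monoid.isComLaw.Build R R0 Rplus
  (fun a b c => esym (Rplus_assoc a b c)) Rplus_comm Rplus_0_l.
HB.instance Definition _ := Monoid.isMulLaw.Build R R0 Rmult Rmult_0_l Rmult_0_r.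
HB.instance Definition _ :=
  Monoid.isAddLaw.Build R Rmult Rplus Rmult_plus_distr_r Rmult_plus_distr_l.

Section RealSums.
Local Open Scope R_scope.
Variable n : nat.

Lemma sum_ge0 (P : pred 'I_n) (F : 'I_n -> R) :
  (forall l, P l -> 0 <= F l) -> 0 <= \big[Rplus/0]_(l < n | P l) F l.
Proof.
move=> F_ge0; apply: (big_ind (fun x => 0 <= x)) => [|x y|l Pl]; [lra | lra | exact: F_ge0].
Qed.

Lemma sum_minus (F G : 'I_n -> R) :
  \big[Rplus/0]_(l < n) (F l - G l)
  = \big[Rplus/0]_(l < n) F l - \big[Rplus/0]_(l < n) G l.
Proof. by rewrite /Rminus big_split /= (big_morph Ropp Ropp_plus_distr Ropp_0). Qed.

Lemma sum_ge0_eq0 (F : 'I_n -> R) :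
  (forall l, 0 <= F l) -> \big[Rplus/0]_(l < n) F l <= 0 -> forall l, F l = 0.
Proof.
move=> F_ge0 sum_le0 l; rewrite (bigD1 l) //= in sum_le0.
apply: Rle_antisym (F_ge0 l); apply: Rle_trans sum_le0.
by rewrite -{1}(Rplus_0_r (F l)); apply/Rplus_le_compat_l/sum_ge0.
Qed.

End RealSums.

Section GeometricRepresentation.
Local Open Scope R_scope.
Variables (n : nat) (M : 'I_n -> 'I_n -> R).

(* Tits' geometric representation of W attached to M: [refl t] is the reflection
   v |-> v - <alpha_t^v, v> alpha_t, where <alpha_t^v, alpha_l> = M t l. *)
Definition alpha (t : 'I_n) : 'I_n -> R := fun l => if l == t then 1 else 0.

Definition coroot (t : 'I_n) (v : 'I_n -> R) : R := \big[Rplus/0]_(l < n) (M t l * v l).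

Definition refl (t : 'I_n) (v : 'I_n -> R) : 'I_n -> R :=
  fun l => v l - coroot t v * alpha t l.

Definition act (w : seq 'I_n) (v : 'I_n -> R) : 'I_n -> R := foldr refl v w.

Lemma sum_mul_alpha (F : 'I_n -> R) t : \big[Rplus/0]_(l < n) (F l * alpha t l) = F t.
Proof. by rewrite (bigD1 t) //= /alpha eqxx big1 => [|l /negbTE ->]; ring. Qed.

Lemma coroot_alpha t u : coroot t (alpha u) = M t u.
Proof. exact: sum_mul_alpha. Qed.

Lemma coroot_lin t x y (u v : 'I_n -> R) :
  coroot t (fun l => x * u l + y * v l) = x * coroot t u + y * coroot t v.
Proof. rewrite /coroot !big_distrr -big_split; apply: eq_bigr => l _ /=; ring. Qed.

Lemma coroot_minus t (u v : 'I_n -> R) :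
  coroot t (fun l => u l - v l) = coroot t u - coroot t v.
Proof. by rewrite /coroot -sum_minus; apply: eq_bigr => l _ /=; ring. Qed.

Lemma coroot_sum t (c : 'I_n -> R) (u : 'I_n -> 'I_n -> R) :
  coroot t (fun m => \big[Rplus/0]_(l < n) (c l * u l m))
  = \big[Rplus/0]_(l < n) (c l * coroot t (u l)).
Proof.
rewrite /coroot; under eq_bigr do rewrite big_distrr.
rewrite exchange_big; apply: eq_bigr => l _; rewrite big_distrr.
by apply: eq_bigr => m _ /=; ring.
Qed.

Lemma refl_lin t x y (u v : 'I_n -> R) :
  refl t (fun l => x * u l + y * v l) = fun l => x * refl t u l + y * refl t v l.
Proof. apply: functional_extensionality => l; rewrite /refl coroot_lin; ring. Qed.

Lemma act_lin w x y (u v : 'I_n -> R) :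
  act w (fun l => x * u l + y * v l) = fun l => x * act w u l + y * act w v l.
Proof. by elim: w => [|t w /= ->] //; rewrite refl_lin. Qed.

Lemma act_sum w (c : 'I_n -> R) (u : 'I_n -> 'I_n -> R) :
  act w (fun m => \big[Rplus/0]_(l < n) (c l * u l m))
  = fun m => \big[Rplus/0]_(l < n) (c l * act w (u l) m).
Proof.
elim: w => [//|t w /= ->]; apply: functional_extensionality => m.
rewrite /refl (coroot_sum t c (fun l => act w (u l))) big_distrl /= -sum_minus.
by apply: eq_bigr => l _ /=; ring.
Qed.

Lemma act_decomp w v : act w v = fun m => \big[Rplus/0]_(l < n) (v l * act w (alpha l) m).
Proof.
rewrite -act_sum; congr act; apply: functional_extensionality => m.
by rewrite -[LHS](sum_mul_alpha v m); apply: eq_bigr => l _; rewrite /alpha eq_sym.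
Qed.

Lemma act_cat u w v : act (u ++ w) v = act u (act w v).
Proof. exact: foldr_cat. Qed.

Lemma coroot_refl u t v : coroot u (refl t v) = coroot u v - coroot t v * M u t.
Proof.
have -> : refl t v = fun l => 1 * v l + (- coroot t v) * alpha t l.
  by apply: functional_extensionality => l; rewrite /refl; ring.
rewrite coroot_lin coroot_alpha; ring.
Qed.

Lemma refl_fix t v : coroot t v = 0 -> refl t v = v.
Proof. by move=> ortho; apply: functional_extensionality => l; rewrite /refl ortho; ring. Qed.

Definition fire_seq (lam : 'I_n -> R) (t : seq 'I_n) : 'I_n -> R :=
  foldl (fun l i => fire M i l) lam t.

Lemma fire_seq_act lam t u :
  fire_seq lam t u = \big[Rplus/0]_(l < n) (lam l * act t (alpha u) l).
Proof.
elim: t lam => [|i t IHt] lam /=; first by rewrite /fire_seq /= sum_mul_alpha.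
rewrite /fire_seq /= -/(fire_seq (fire M i lam) t) IHt /fire /refl.
set a := act t (alpha u).
have -> : \big[Rplus/0]_(l < n) ((lam l - M i l * lam i) * a l)
          = \big[Rplus/0]_(l < n) (lam l * a l) - lam i * coroot i a.
  by rewrite /coroot big_distrr -sum_minus; apply: eq_bigr => l _ /=; ring.
rewrite -(sum_mul_alpha lam i) big_distrl -sum_minus.
by apply: eq_bigr => l _ /=; ring.
Qed.

Lemma legal_seq_of_pos lam t :
  (forall t1 i t2, t = t1 ++ i :: t2 -> 0 < fire_seq lam t1 i) -> legal_seq M lam t.
Proof.
elim: t lam => [//|i t IHt] lam pos /=; split; first exact: (pos [::] i t).
by apply: IHt => t1 j t2 t_eq; apply: (pos (i :: t1) j t2); rewrite t_eq.
Qed.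

Hypothesis M_diag : forall t, M t t = 2.

Lemma refl_invol t v : refl t (refl t v) = v.
Proof.
apply: functional_extensionality => l.
rewrite {1}/refl coroot_refl M_diag /refl; ring.
Qed.

Lemma act_rev_cancel w v : act (rev w) (act w v) = v.
Proof.
elim: w v => [//|t w IHw] v.
by rewrite rev_cons -cats1 act_cat /= refl_invol IHw.
Qed.

Lemma refl_alpha t : refl t (alpha t) = fun l => - alpha t l.
Proof.
by apply: functional_extensionality => l; rewrite /refl coroot_alpha M_diag; ring.
Qed.

End GeometricRepresentation.

Lemma ex_minimal (P : nat -> Prop) k : P k -> exists m, P m /\ forall j, P j -> m <= j.
Proof.
elim/ltn_ind: k => k IHk Pk.
case: (classic (exists2 j, j < k & P j)) => [[j lt_jk Pj]|no_smaller].
  exact: IHk j lt_jk Pj.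
exists k; split=> // j Pj; rewrite leqNgt; apply/negP => lt_jk.
by apply: no_smaller; exists j.
Qed.

Section AlternatingWords.
Variable T : Type.

(* [alt t u m] is the alternating word [:: ...; u; t] of length [m], ending in [t]. *)
Fixpoint alt (t u : T) (m : nat) : seq T :=
  if m is m'.+1 then rcons (alt u t m') t else [::].

Lemma size_alt t u m : size (alt t u m) = m.
Proof. by elim: m t u => [//|m IHm] t u /=; rewrite size_rcons IHm. Qed.

Lemma alt_cons t u m : alt t u m.+1 = (if odd m then u else t) :: alt t u m.
Proof. by elim: m t u => [//|m IHm] t u; rewrite /= -/(alt u t m.+1) IHm; case: (odd m). Qed.

Lemma alt_add t u j k :
  alt t u (j + k) = alt (if odd k then u else t) (if odd k then t else u) j ++ alt t u k.
Proof.
elim: k t u => [|k IHk] t u; first by rewrite addn0 cats0.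
by rewrite addnS /= IHk rcons_cat; case: (odd k).
Qed.

Lemma alt_suffix t u m k : k <= m -> exists y, alt t u m = y ++ alt t u k.
Proof.
by move=> le_km; exists (alt (if odd k then u else t) (if odd k then t else u) (m - k));
  rewrite -alt_add subnK.
Qed.

Lemma rev_alt t u k : rev (alt t u k) = alt (if odd k then t else u) (if odd k then u else t) k.
Proof.
elim: k t u => [//|k IHk] t u.
by rewrite [in LHS]/= rev_rcons IHk alt_cons /=; case: (odd k).
Qed.

Lemma flatten_nseq_alt (t u : T) k : flatten (nseq k [:: t; u]) = alt u t (k + k).
Proof.
elim: k => [//|k IHk].
by rewrite addSn addnS !alt_cons /= -IHk oddD addbb.
Qed.

Lemma rev_flatten_nseq (t u : T) k :
  rev (flatten (nseq k [:: t; u])) = flatten (nseq k [:: u; t]).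
Proof. by rewrite !flatten_nseq_alt rev_alt oddD addbb. Qed.

End AlternatingWords.

Section CoxeterWords.
Variables (n : nat) (M : 'I_n -> 'I_n -> R).

Lemma coxeq_cat2 x u v y : coxeq M u v -> coxeq M (x ++ u ++ y) (x ++ v ++ y).
Proof.
elim=> {u v} [w|u v _|u v w _ IHuv _|u r v rel]; first exact: coxeq_refl.
- exact: coxeq_sym.
- exact: coxeq_trans.
- by have := coxeq_rel (x ++ u) (v ++ y) rel; rewrite -!catA.
Qed.

Lemma coxeq_catl x u v : coxeq M u v -> coxeq M (x ++ u) (x ++ v).
Proof. by move/(coxeq_cat2 x [::]); rewrite !cats0. Qed.

Lemma coxeq_catr y u v : coxeq M u v -> coxeq M (u ++ y) (v ++ y).
Proof. exact: (coxeq_cat2 [::] y). Qed.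

Lemma coxeq_square x t y : coxeq M (x ++ [:: t; t] ++ y) (x ++ y).
Proof. by apply: coxeq_rel; left; exists t. Qed.

Lemma coxeq_rcons2 u t : coxeq M (rcons (rcons u t) t) u.
Proof. by have := coxeq_square u t [::]; rewrite !cats0 -!cats1 -catA. Qed.

Lemma coxeq_cat_rev w : coxeq M (w ++ rev w) [::].
Proof.
elim: w => [|t w IHw]; first exact: coxeq_refl.
apply: coxeq_trans (coxeq_square [::] t [::]).
by have := coxeq_cat2 [:: t] [:: t] IHw; rewrite /= rev_cons -cats1 -catA.
Qed.

Lemma coxeq_rcons t u v : coxeq M u v -> coxeq M (rcons u t) (rcons v t).
Proof. by rewrite -!cats1; apply: coxeq_catr. Qed.

Lemma coxeq_inv_rev u v : coxeq M (u ++ v) [::] -> coxeq M u (rev v).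
Proof.
move=> uv_nil; apply: coxeq_trans (_ : coxeq M ((u ++ v) ++ rev v) _).
  by have := coxeq_catl u (coxeq_cat_rev v); rewrite cats0 catA; apply: coxeq_sym.
exact: coxeq_catr _ uv_nil.
Qed.

Lemma odd_size_coxeq u v : coxeq M u v -> odd (size u) = odd (size v).
Proof.
elim=> {u v} [//|u v _ -> //|u v w _ -> _ -> //|u r v rel].
rewrite !size_cat !oddD; suff -> : odd (size r) = false by [].
case: rel => [[i ->] //|[i [j [k [_ [_ [_ ->]]]]]]].
by rewrite flatten_nseq_alt size_alt oddD addbb.
Qed.

Lemma coxeq_rev u v : coxeq M u v -> coxeq M (rev u) (rev v).
Proof.
elim=> {u v} [w|u v _|u v w _ IHuv _|u r v rel]; first exact: coxeq_refl.
- exact: coxeq_sym.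
- exact: coxeq_trans.
rewrite !rev_cat -catA; apply: coxeq_rel.
case: rel => [[i ->]|[i [j [k [neq_ij [le2k [Mij ->]]]]]]]; first by left; exists i.
right; exists j, i, k; rewrite eq_sym Rmult_comm rev_flatten_nseq.
by split.
Qed.

Lemma braid_words i j k :
  cox_relator M (flatten (nseq k [:: i; j])) -> coxeq M (alt i j k) (alt j i k).
Proof.
move=> rel; have := coxeq_rel [::] [::] rel.
rewrite /= cats0 flatten_nseq_alt alt_add => /coxeq_inv_rev.
by rewrite rev_alt; case: (odd k) => //; apply: coxeq_sym.
Qed.

Lemma reduced_catl u v : reduced M (u ++ v) -> reduced M u.
Proof.
by move=> red w /(coxeq_catr v) /red; rewrite !size_cat leq_add2r.
Qed.

Lemma reduced_catr u v : reduced M (u ++ v) -> reduced M v.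
Proof.
by move=> red w /(coxeq_catl u) /red; rewrite !size_cat leq_add2l.
Qed.

Lemma reduced_rev w : reduced M w -> reduced M (rev w).
Proof.
by move=> red v /coxeq_rev; rewrite revK => /red; rewrite !size_rev.
Qed.

Lemma reduced_coxeq u v : reduced M u -> coxeq M v u -> size v = size u -> reduced M v.
Proof. by move=> red vu size_vu w wv; rewrite size_vu; apply/red/(coxeq_trans wv vu). Qed.

Lemma reduced_alt_le t u k m :
  coxeq M (alt u t m) (alt t u m) -> 0 < m -> reduced M (alt t u k) -> k <= m.
Proof.
case: m => [//|m] braid _ red; rewrite leqNgt; apply/negP => lt_mk.
have [y alt_k] := alt_suffix t u lt_mk.
have /reduced_catr red_m2 : reduced M (y ++ alt t u m.+2) by rewrite -alt_k.
have shorter : coxeq M (alt t u m.+2) (alt u t m).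
  exact: coxeq_trans (coxeq_rcons t braid) (coxeq_rcons2 _ t).
by have := red_m2 _ (coxeq_sym shorter); rewrite !size_alt; lia.
Qed.

Lemma alt_of_reduced s s' x :
  s != s' -> all (pred2 s s') x -> reduced M (rcons x s) -> x = alt s' s (size x).
Proof.
elim/last_ind: x s s' => [//|y b IHy] s s' neq_ss'.
rewrite all_rcons => /andP [b_ss' y_ss'] red.
have b_s' : b = s'.
  case/orP: b_ss' => /eqP // b_s; subst b.
  by have := red _ (coxeq_sym (coxeq_rcons2 y s)); rewrite !size_rcons; lia.
subst b; rewrite size_rcons /= -(IHy s' s) //.
- by rewrite eq_sym.
- by apply: sub_all y_ss' => t /=; rewrite orbC.
- by move: red; rewrite -cats1 => /reduced_catl.
Qed.

Lemma cox_length_exists w : exists k, cox_length M w k.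
Proof.
have [|k [[v [vw size_v]] min_k]] :=
  @ex_minimal (fun k => exists v, coxeq M v w /\ size v = k) (size w).
  by exists w; split=> //; apply: coxeq_refl.
by exists k; split; [exists v | move=> u uw; apply: min_k; exists u].
Qed.

Lemma cox_length_reduced w : reduced M w -> cox_length M w (size w).
Proof. by move=> red; split=> //; exists w; split=> //; apply: coxeq_refl. Qed.

Lemma reduced_rcons_min_coset J w j :
  reduced M w -> in_min_coset_reps M J w -> j \in J -> reduced M (rcons w j).
Proof.
move=> red min_coset jJ.
have [a len_a] := cox_length_exists (rcons w j).
have lt_wa := min_coset j jJ a (size w) len_a (cox_length_reduced red).
by move=> v /(proj2 len_a) /(leq_trans lt_wa); rewrite size_rcons.
Qed.

Lemma min_pair_factor s s' w v0 x0 :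
  reduced M w -> coxeq M (v0 ++ x0) w -> size (v0 ++ x0) = size w -> all (pred2 s s') x0 ->
  exists v x, [/\ coxeq M (v ++ x) w, size (v ++ x) = size w, all (pred2 s s') x,
    size v <= size v0 & forall t, pred2 s s' t -> reduced M (rcons v t)].
Proof.
move=> red_w v0x0_w size_v0x0 x0_ss'.
pose P m := exists v x,
  [/\ size v = m, coxeq M (v ++ x) w, size (v ++ x) = size w & all (pred2 s s') x].
have [|m [[v [x [size_v vx_w size_vx x_ss']]] min_m]] := @ex_minimal P (size v0).
  by exists v0, x0.
exists v, x; split=> //; first by rewrite size_v; apply: min_m; exists v0, x0.
move=> t t_ss' u u_vt; rewrite size_rcons leqNgt; apply/negP => short.
have lt_uv : size u < size v.
  have := odd_size_coxeq u_vt; rewrite size_rcons /= ltn_neqAle -ltnS short andbT.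
  by apply: contra_eqN => /eqP ->; case: (odd _).
have ux_w : coxeq M (u ++ t :: x) w.
  rewrite -cat_rcons; apply: coxeq_trans (coxeq_catr x (coxeq_rcons t u_vt)) _.
  exact: coxeq_trans (coxeq_catr x (coxeq_rcons2 v t)) vx_w.
suff /min_m : P (size u) by rewrite -size_v leqNgt lt_uv.
exists u, (t :: x); split=> //; last by apply/andP.
apply/eqP; rewrite eqn_leq (red_w _ ux_w) andbT.
by move: size_vx; rewrite !size_cat /= => <-; lia.
Qed.

End CoxeterWords.

Section DihedralCoefficients.
Local Open Scope R_scope.

(* The coordinates of [act (alt s' s m) (alpha s)] on alpha_s and alpha_s' when
   a = - M s s' and b = - M s' s (lemma [act_alt_coef]). *)
Fixpoint coef (a b : R) (m : nat) : R * R :=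
  if m is m'.+1 then
    let pq := coef a b m' in
    if odd m' then (a * pq.2 - pq.1, pq.2) else (pq.1, b * pq.1 - pq.2)
  else (1, 0).

Lemma coefS a b m : coef a b m.+1 =
  if odd m then (a * (coef a b m).2 - (coef a b m).1, (coef a b m).2)
  else ((coef a b m).1, b * (coef a b m).1 - (coef a b m).2).
Proof. by []. Qed.

(* [cheb c j = U_(j-1) (c / 2)], with U the Chebyshev polynomials of the second kind. *)
Fixpoint cheb (c : R) (j : nat) : R :=
  match j with 0 => 0 | 1 => 1 | (j'.+1 as j1).+1 => c * cheb c j1 - cheb c j' end.

Lemma chebSS c j : cheb c j.+2 = c * cheb c j.+1 - cheb c j.
Proof. by []. Qed.

Lemma coef_cheb a b c : c <> 0 -> c * c = a * b -> forall t,
  coef a b (t + t) = (cheb c (t + t).+1, b / c * cheb c (t + t)) /\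
  coef a b (t + t).+1 = (cheb c (t + t).+1, b / c * cheb c (t + t).+2).
Proof.
move=> c_neq0 c2_ab.
have abc : a * (b / c) = c by rewrite /Rdiv -Rmult_assoc -c2_ab; field.
elim=> [|t [IH1 IH2]]; first by split; rewrite /=; f_equal; field.
rewrite addSn addnS.
have even_step : coef a b (t + t).+2 = (cheb c (t + t).+3, b / c * cheb c (t + t).+2).
  rewrite coefS IH2 oddS oddD addbb; cbn [fst snd negb].
  rewrite (chebSS c (t + t).+1); f_equal.
  by rewrite -Rmult_assoc abc.
split=> //; rewrite coefS even_step !oddS oddD addbb; cbn [fst snd negb].
rewrite (chebSS c (t + t).+2).
by f_equal; field.
Qed.

Lemma cheb_sin th : sin th <> 0 -> forall j, cheb (2 * cos th) j = sin (INR j * th) / sin th.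
Proof.
move=> sin_neq0.
suff cheb2 j : cheb (2 * cos th) j = sin (INR j * th) / sin th /\
               cheb (2 * cos th) j.+1 = sin (INR j.+1 * th) / sin th by move=> j; case: (cheb2 j).
elim: j => [|j [IH1 IH2]].
  by split; rewrite /= ?Rmult_0_l ?Rmult_1_l ?sin_0; field.
split=> //; rewrite chebSS IH1 IH2.
have -> : INR j.+2 * th = INR j.+1 * th + th by rewrite (S_INR j.+1); ring.
have -> : INR j * th = INR j.+1 * th - th by rewrite (S_INR j); ring.
by rewrite sin_plus sin_minus; field.
Qed.

Lemma angle_facts (k : nat) : (2 <= k)%nat ->
  0 < sin (PI / INR k) /\ INR k * (PI / INR k) = PI /\ 0 < PI / INR k.
Proof.
move=> le2k; have k_ge2 : 2 <= INR k by have := le_INR _ _ (leP le2k); rewrite /=; lra.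
have PI_pos := PI_RGT_0.
have th_pos : 0 < PI / INR k by apply: Rdiv_lt_0_compat; lra.
split; last by split=> //; field; lra.
apply: sin_gt_0 => //; apply: (Rmult_lt_reg_r (INR k)); first lra.
by rewrite /Rdiv Rmult_assoc Rinv_l; nra.
Qed.

Lemma cos_angle_pos (k : nat) : (3 <= k)%nat -> 0 < cos (PI / INR k).
Proof.
move=> le3k; have k_ge3 : 3 <= INR k by have := le_INR _ _ (leP le3k); rewrite /=; lra.
have PI_pos := PI_RGT_0.
have th_pos : 0 < PI / INR k by apply: Rdiv_lt_0_compat; lra.
apply: cos_gt_0; first lra.
apply: (Rmult_lt_reg_r (INR k)); first lra.
by rewrite /Rdiv Rmult_assoc Rinv_l; nra.
Qed.

Lemma cheb_ge0_angle (k j : nat) : (2 <= k)%nat -> (j <= k)%nat ->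
  0 <= cheb (2 * cos (PI / INR k)) j.
Proof.
move=> le2k le_jk; have [sin_pos [k_th th_pos]] := angle_facts le2k.
rewrite cheb_sin; last lra.
apply: Rmult_le_pos; last by left; apply: Rinv_0_lt_compat.
apply: sin_ge_0; first by apply: Rmult_le_pos; [exact: pos_INR | lra].
by rewrite -{2}k_th; apply: Rmult_le_compat_r; [lra | apply/le_INR/leP].
Qed.

Lemma cheb_ge0_ge2 c : 2 <= c -> forall j, 0 <= cheb c j.
Proof.
move=> c_ge2.
suff mono j : 0 <= cheb c j <= cheb c j.+1 by move=> j; case: (mono j).
by elim: j => [|j [IH1 IH2]]; [rewrite /=; lra | split; [lra | rewrite chebSS; nra]].
Qed.

Lemma coef_ge0_cheb a b c m : 0 < c -> c * c = a * b -> 0 <= b ->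
  (forall j, (j <= m.+1)%nat -> 0 <= cheb c j) -> 0 <= (coef a b m).1 /\ 0 <= (coef a b m).2.
Proof.
move=> c_pos c2_ab b_ge0 cheb_ge0.
have bc_ge0 : 0 <= b / c by apply: Rmult_le_pos => //; left; apply: Rinv_0_lt_compat.
have c_neq0 : c <> 0 by lra.
move: (odd_double_half m); rewrite -addnn; move: (m./2) => t.
case: (odd m) => m_eq; subst m; rewrite ?add1n ?add0n in cheb_ge0 *.
- rewrite (proj2 (coef_cheb c_neq0 c2_ab t)); cbn [fst snd].
  by split; [|apply: Rmult_le_pos => //]; apply: cheb_ge0.
- rewrite (proj1 (coef_cheb c_neq0 c2_ab t)); cbn [fst snd].
  by split; [|apply: Rmult_le_pos => //]; apply: cheb_ge0.
Qed.

Lemma coef_ge0 a b m : 0 <= a -> 0 <= b ->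
  (exists k, [/\ (2 <= k)%nat, a * b = 4 * cos (PI / INR k) ^ 2 & (m < k)%nat]) \/ 4 <= a * b ->
  0 <= (coef a b m).1 /\ 0 <= (coef a b m).2.
Proof.
move=> a_ge0 b_ge0 ab_case.
case: m ab_case => [|[|m]] ab_case; [rewrite /=; lra | rewrite /=; lra |].
case: ab_case => [[k [le2k ab_cos lt_mk]]|ab_ge4].
- have le3k : (3 <= k)%nat by apply: leq_trans lt_mk.
  have := cos_angle_pos le3k => cos_pos.
  apply: (coef_ge0_cheb (c := 2 * cos (PI / INR k))) => //; first lra.
    by rewrite ab_cos; ring.
  by move=> j le_jm; apply: cheb_ge0_angle => //; apply: leq_trans le_jm lt_mk.
- have := sqrt_sqrt (a * b); have := sqrt_pos (a * b) => sqrt_ge0 sqrt2.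
  apply: (coef_ge0_cheb (c := sqrt (a * b))) => //; first by apply: sqrt_lt_R0; lra.
    by apply: sqrt2; lra.
  by move=> j _; apply: cheb_ge0_ge2; nra.
Qed.

Lemma coef_period a b k : (3 <= k)%nat -> a * b = 4 * cos (PI / INR k) ^ 2 ->
  coef a b (k + k) = (1, 0).
Proof.
move=> le3k ab_cos.
have [sin_pos [k_th th_pos]] := angle_facts (ltnW le3k).
have cos_pos := cos_angle_pos le3k.
set th := PI / INR k in sin_pos k_th th_pos cos_pos ab_cos.
have c_neq0 : 2 * cos th <> 0 by lra.
have c2_ab : (2 * cos th) * (2 * cos th) = a * b by rewrite ab_cos; ring.
rewrite (proj1 (coef_cheb c_neq0 c2_ab k)) !cheb_sin; try lra.
have -> : INR (k + k).+1 * th = th + PI + PI by rewrite S_INR plus_INR -k_th; ring.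
have -> : INR (k + k) * th = 0 + PI + PI by rewrite plus_INR -k_th; ring.
by rewrite !neg_sin sin_0; f_equal; field; lra.
Qed.

End DihedralCoefficients.

Section GeneralizedCartanMatrix.
Local Open Scope R_scope.
Variables (n : nat) (M : 'I_n -> 'I_n -> R).
Hypothesis egcm : is_EGCM M.

Lemma egcm_diag t : M t t = 2.
Proof. by case: egcm. Qed.

Lemma egcm_le0 i j : i != j -> M i j <= 0.
Proof. by case: egcm => _ [le0 _]; apply: le0. Qed.

Lemma egcm_prod_eq0 i j : M i j * M j i = 0 -> M i j = 0 /\ M j i = 0.
Proof.
case: egcm => _ [_ [sym0 _]] /Rmult_integral [Mij0|Mji0].
  by split=> //; apply: NNPP => /(proj2 (sym0 i j)).
by split=> //; apply: NNPP => /(proj1 (sym0 i j)).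
Qed.

Lemma egcm_pair_cases i j : i != j ->
  (exists k, (2 <= k)%nat /\ M i j * M j i = 4 * cos (PI / INR k) ^ 2) \/ 4 <= M i j * M j i.
Proof.
move=> neq_ij; case: (Req_dec (M i j) 0) => [Mij0|Mij_neq0].
  by left; exists 2%nat; rewrite Mij0 cos_PI2; split=> //; ring.
case: egcm => _ [_ [_ cases]]; case: (cases i j neq_ij Mij_neq0) => [|[m [le3m cos_m]]].
  by right.
by left; exists m; split=> //; apply: ltnW.
Qed.

Lemma act_alt_coef s s' m :
  act M (alt s' s m) (alpha s)
  = fun l => (coef (- M s s') (- M s' s) m).1 * alpha s l
             + (coef (- M s s') (- M s' s) m).2 * alpha s' l.
Proof.
elim: m => [|m IHm]; first by apply: functional_extensionality => l /=; ring.
rewrite alt_cons coefS /= IHm; case: (coef _ _ m) => p q /=.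
case: (odd m); apply: functional_extensionality => l;
  by rewrite /refl coroot_lin !coroot_alpha !egcm_diag /=; ring.
Qed.

Lemma act_relator_alpha i j k : (2 <= k)%nat -> M i j * M j i = 4 * cos (PI / INR k) ^ 2 ->
  act M (flatten (nseq k [:: i; j])) (alpha i) = alpha i.
Proof.
move=> le2k Mk; rewrite flatten_nseq_alt act_alt_coef.
suff -> : coef (- M i j) (- M j i) (k + k) = (1, 0).
  by apply: functional_extensionality => l /=; ring.
move: le2k; rewrite leq_eqVlt => /orP [/eqP k2|le3k]; last first.
  by apply: coef_period => //; rewrite -Mk; ring.
subst k; have [-> ->] : M i j = 0 /\ M j i = 0.
  apply: egcm_prod_eq0; rewrite Mk (_ : PI / INR 2 = PI / 2) ?cos_PI2; first by ring.
  by rewrite /=; field.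
by rewrite /= Ropp_0; f_equal; ring.
Qed.

Lemma act_fix_orth i j k v : coroot M i v = 0 -> coroot M j v = 0 ->
  act M (flatten (nseq k [:: i; j])) v = v.
Proof. by move=> orth_i orth_j; elim: k => //= k ->; rewrite !refl_fix. Qed.

Lemma dihedral_decomp i j v : M i j * M j i <> 4 ->
  exists p q, coroot M i (fun l => v l - (p * alpha i l + q * alpha j l)) = 0
           /\ coroot M j (fun l => v l - (p * alpha i l + q * alpha j l)) = 0.
Proof.
move=> det_neq0; rewrite /=.
set X := coroot M i v; set Y := coroot M j v; set D := 4 - M i j * M j i.
exists ((2 * X - M i j * Y) / D), ((2 * Y - M j i * X) / D).
rewrite !coroot_minus !coroot_lin !coroot_alpha !egcm_diag -/X -/Y.
have : D <> 0 by rewrite /D; lra.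
by split; rewrite /D; field.
Qed.

Lemma act_relator r v : cox_relator M r -> act M r v = v.
Proof.
case=> [[i ->]|[i [j [k [_ [le2k [Mk ->]]]]]]]; first exact: refl_invol egcm_diag _ _.
have Mk' : M j i * M i j = 4 * cos (PI / INR k) ^ 2 by rewrite Rmult_comm.
have fix_i := act_relator_alpha le2k Mk.
have fix_j : act M (flatten (nseq k [:: i; j])) (alpha j) = alpha j.
  rewrite -{1}(act_relator_alpha le2k Mk') -(rev_flatten_nseq j i).
  exact: act_rev_cancel egcm_diag _ _.
have [|p [q [orth_i orth_j]]] := @dihedral_decomp i j v.
  have [sin_pos _] := angle_facts le2k.
  have := sin2_cos2 (PI / INR k); rewrite /Rsqr Mk; nra.
set v0 := fun l => _ in orth_i orth_j.
have {1}-> : v = fun l => 1 * v0 l + 1 * (p * alpha i l + q * alpha j l).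
  by apply: functional_extensionality => l; rewrite /v0; ring.
rewrite act_lin act_fix_orth // act_lin fix_i fix_j.
by apply: functional_extensionality => l; rewrite /v0; ring.
Qed.

Lemma coxeq_act u v : coxeq M u v -> act M u = act M v.
Proof.
elim=> {u v} [//|u v _ -> //|u v w _ -> _ -> //|u r v rel].
by apply: functional_extensionality => x; rewrite !act_cat (act_relator _ rel).
Qed.

Lemma act_alt_alpha_ge0 s s' k : s != s' -> reduced M (alt s s' k.+1) ->
  exists c1 c2, [/\ 0 <= c1, 0 <= c2 &
    act M (alt s' s k) (alpha s) = fun l => c1 * alpha s l + c2 * alpha s' l].
Proof.
move=> neq_ss' red; rewrite act_alt_coef; set cf := coef _ _ k.
suff [] : 0 <= cf.1 /\ 0 <= cf.2 by exists cf.1, cf.2.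
have := egcm_le0 neq_ss'; have := egcm_le0 (contra_neq esym neq_ss').
move=> Ms's_le0 Mss'_le0; apply: coef_ge0; [lra | lra |].
case: (egcm_pair_cases neq_ss') => [[m [le2m Mm]]|ge4]; last by right; lra.
left; exists m; split=> //; first by rewrite -Mm; ring.
have rel : cox_relator M (flatten (nseq m [:: s; s'])) by right; exists s, s', m.
exact: reduced_alt_le (coxeq_sym (braid_words rel)) (ltnW le2m) red.
Qed.

(* Write w = v x with x a longest suffix over {s, s'}: then v alpha_s and v alpha_s'
   are nonnegative by induction, and x alpha_s is given by the dihedral computation. *)
Lemma act_alpha_ge0 w s : reduced M (rcons w s) -> forall l, 0 <= act M w (alpha s) l.
Proof.
have [N] := ubnP (size w); elim: N w s => // N IHN w s /ltnSE le_wN red l.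
case/lastP: w le_wN red => [_ _|w2 s' le_wN red]; first by rewrite /= /alpha; case: ifP; lra.
have neq_s's : s' != s.
  apply/eqP => s'_s; subst s'.
  by have := red _ (coxeq_sym (coxeq_rcons2 M w2 s)); rewrite !size_rcons; lia.
have red_w : reduced M (rcons w2 s') by move: red; rewrite -cats1 => /reduced_catl.
have w2s'_w : coxeq M (w2 ++ [:: s']) (rcons w2 s') by rewrite cats1; apply: coxeq_refl.
have s'_ss' : all (pred2 s s') [:: s'] by rewrite /= eqxx orbT.
have [v [x [vx_w size_vx x_ss' le_v red_vt]]] :=
  min_pair_factor red_w w2s'_w (congr1 size (cats1 w2 s')) s'_ss'.
have red_x : reduced M (rcons x s).
  apply: (reduced_catr (u := v)); rewrite -rcons_cat.
  by apply: reduced_coxeq red (coxeq_rcons s vx_w) _; rewrite !size_rcons size_vx size_rcons.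
have neq_ss' : s != s' by rewrite eq_sym.
have x_alt := alt_of_reduced neq_ss' x_ss' red_x.
have red_alt : reduced M (alt s s' (size x).+1) by rewrite /= -x_alt.
have [c1 [c2 [c1_ge0 c2_ge0 act_x]]] := act_alt_alpha_ge0 neq_ss' red_alt.
rewrite -(coxeq_act vx_w) act_cat x_alt act_x act_lin.
have lt_vN : (size v < N)%nat by apply: leq_ltn_trans le_v _; rewrite size_rcons in le_wN.
apply: Rplus_le_le_0_compat; apply: Rmult_le_pos => //; apply: IHN lt_vN _ _.
  by apply: red_vt; rewrite /= eqxx.
by apply: red_vt; rewrite /= eqxx orbT.
Qed.

Lemma fire_seq_pos J lam t i : in_CJ J lam -> reduced M (rcons t i) ->
  (forall j, j \in J -> reduced M (rcons (i :: rev t) j)) -> 0 < fire_seq M lam t i.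
Proof.
move=> [lam_J lam_nJ] red_ti red_J.
have lam_ge0 l : 0 <= lam l.
  by case: (boolP (l \in J)) => lJ; [rewrite lam_J //; lra | have := lam_nJ l lJ; lra].
have beta_ge0 := act_alpha_ge0 red_ti.
rewrite fire_seq_act; apply: Rnot_le_lt => sum_le0.
have beta_J l : l \notin J -> act M t (alpha i) l = 0.
  move=> lJ; have := sum_ge0_eq0 (fun l => Rmult_le_pos _ _ (lam_ge0 l) (beta_ge0 l)) sum_le0 l.
  by case/Rmult_integral => // lam0; have := lam_nJ l lJ; lra.
have : 0 <= act M (i :: rev t) (act M t (alpha i)) i.
  rewrite act_decomp; apply: sum_ge0 => l _; case: (boolP (l \in J)) => lJ.
    by apply: Rmult_le_pos; [apply: beta_ge0 | apply: act_alpha_ge0; apply: red_J].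
  by rewrite beta_J // Rmult_0_l; apply: Rle_refl.
rewrite /= (act_rev_cancel egcm_diag) (refl_alpha egcm_diag) /alpha eqxx; lra.
Qed.

End GeneralizedCartanMatrix.

Theorem proposition5p2 (n : nat) (M : 'I_n -> 'I_n -> R) (J : {set 'I_n})
  (s : seq 'I_n) (lam : 'I_n -> R) :
  is_EGCM M ->
  parabolic_finite M J ->
  reduced M (rev s) ->
  in_min_coset_reps M J (rev s) ->
  in_CJ J lam ->
  forall q, 1 <= q <= size s -> legal_seq M lam (take q s).
Proof.
move=> egcm _ red_revs min_coset lam_CJ q _.
have red_s : reduced M s by rewrite -(revK s); apply: reduced_rev.
apply: legal_seq_of_pos => t i t' take_eq.
have s_eq : s = t ++ i :: (t' ++ drop q s) by rewrite -[LHS](cat_take_drop q) take_eq -catA.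
apply: (fire_seq_pos egcm lam_CJ).
  by move: red_s; rewrite s_eq -cat_rcons => /reduced_catl.
move=> j jJ; have := reduced_rcons_min_coset red_revs min_coset jJ.
by rewrite {1}s_eq rev_cat rev_cons cat_rcons rcons_cat => /reduced_catr.
Qed.
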